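(* Let $$\Lambda=\begin{pmatrix}2&-1&-1&-1&-1&-1&3&0&0&0&0&0\\-1&2&-1&-1&-1&-1&0&3&0&0&0&0\\-1&-1&2&-1&-1&-1&0&0&3&0&0&0\\0&0&0&3&0&0&-1&-1&-1&2&-1&-1\\0&0&0&0&3&0&-1&-1&-1&-1&2&-1\end{pmatrix},$$ $$W=\begin{pmatrix}3&0&0&-1&-1&-1\\0&3&0&-1&-1&-1\\0&0&3&-1&-1&-1\\-1&-1&-1&3&0&0\\-1&-1&-1&0&3&0\end{pmatrix}.$$ Let $\mathbb X$ be the complete toric variety whose fan is the fan over the faces of $\Delta=\mathrm{conv}(\Lambda)\subset\mathbb R^5$, and $X$ the complete toric variety whose fan is the fan over the faces of the simplex $\mathrm{conv}(W)$ (so $X\cong\mathbb P^5/(\mu_3^2\times\mu_9)$). The fan of $\mathbb X$ refines that of $X$, and $\phi:\mathbb X\to X$ denotes the induced birational toric morphism (the blow up of $X$ at six torus fixed points). Let $x_1,\dots,x_{12}$ be the Cox coordinates of $\mathbb X$ ($x_i$ corresponding to the $i$-th column of $\Lambda$) and $y_1,\dots,y_6$ those of $X$ ($y_j$ corresponding to the $j$-th column of $W$). For $\psi\in\mathbb C$ let $Y^\vee_{BB}=\mathcal V(p_{1,\psi},p_{2,\psi})\subset\mathbb X$ and $Y^\vee_{LT}=\mathcal V(q_{1,\psi},q_{2,\psi})\subset X$ with $$p_{1,\psi}=x_1^3x_7^3+x_2^3x_8^3+x_3^3x_9^3+\psi x_1x_2x_3x_4x_5x_6,\quad p_{2,\psi}=x_4^3x_{10}^3+x_5^3x_{11}^3+x_6^3x_{12}^3+\psi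 x_7x_8x_9x_{10}x_{11}x_{12},$$ $$q_{1,\psi}=y_1^3+y_2^3+y_3^3+\psi y_4y_5y_6,\quad q_{2,\psi}=\psi y_1y_2y_3+y_4^3+y_5^3+y_6^3.$$ Then, for generic $\psi$, $Y^\vee_{BB}=\phi^{-1}_*(Y^\vee_{LT})$ is the strict transform of $Y^\vee_{LT}$ under $\phi$.
   Context: The fan over the faces of a polytope containing the origin in its interior is the complete fan consisting of the cones over its proper faces. Cox coordinates: a complete toric variety whose rays are generated by the columns of a fan matrix is a quotient of an open subset of $\mathbb C^m$ ($m$ = number of columns) by a quasi-torus; $\mathcal V(f_1,\dots,f_s)$ is the subvariety cut out by the homogeneous polynomials $f_i$. The strict transform $\phi^{-1}_*(Y)$ is the closure of $\phi^{-1}(Y\cap U)$, $U$ the open set over which $\phi$ is an isomorphism. *)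

From HB Require Import structures.
From mathcomp Require Import all_boot all_order all_algebra.
From mathcomp Require Import complex.
From mathcomp Require Import Rstruct.
From mathcomp Require mpoly.
Set Implicit Arguments. Unset Strict Implicit. Unset Printing Implicit Defensive.
Import GRing.Theory Num.Theory.
Local Open Scope ring_scope.

Definition RR : realFieldType := Rdefinitions.R.
Definition C : numClosedFieldType := (Rdefinitions.R)[i].

(** Fan matrices (columns = ray generators in N = Z^5). *)
Definition mat_of_rows (m : nat) (rows : seq (seq int)) : 'M[int]_(5, m) :=
  \matrix_(k < 5, i < m) nth 0 (nth [::] rows k) i.

Definition Lambda : 'M[int]_(5, 12) := mat_of_rows 12
  [:: [:: 2; -1; -1; -1; -1; -1; 3; 0; 0; 0; 0; 0];
      [:: -1; 2; -1; -1; -1; -1; 0; 3; 0; 0; 0; 0];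
      [:: -1; -1; 2; -1; -1; -1; 0; 0; 3; 0; 0; 0];
      [:: 0; 0; 0; 3; 0; 0; -1; -1; -1; 2; -1; -1];
      [:: 0; 0; 0; 0; 3; 0; -1; -1; -1; -1; 2; -1] ]%R.

Definition Wm : 'M[int]_(5, 6) := mat_of_rows 6
  [:: [:: 3; 0; 0; -1; -1; -1];
      [:: 0; 3; 0; -1; -1; -1];
      [:: 0; 0; 3; -1; -1; -1];
      [:: -1; -1; -1; 3; 0; 0];
      [:: -1; -1; -1; 0; 3; 0] ]%R.

Section Toric.
Variables (m : nat) (M : 'M[int]_(5, m)).

(** [I] is the set of columns of [M] lying on a proper face of conv(M)
    (the origin being interior): there is a linear functional [u] with
    <u, v_i> = 1 exactly for i in I and <u, v_i> < 1 for the other columns.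
    The cones of the fan over the faces of conv(M) are the cones spanned by
    such column sets. *)
Definition face_set (I : {set 'I_m}) : Prop :=
  exists u : 'I_5 -> RR,
    (forall i, i \in I -> \sum_(k < 5) u k * (M k i)%:~R = 1) /\
    (forall i, i \notin I -> \sum_(k < 5) u k * (M k i)%:~R < 1).

(** Points of C^m outside the exceptional set Z(Sigma): the coordinates
    vanishing at x are rays of a common cone of the fan. *)
Definition nonexc (x : 'I_m -> C) : Prop :=
  exists I, face_set I /\ forall i, x i = 0 -> i \in I.

(** The quasi-torus G = Hom(Cl, C-star) acting on C^m. *)
Definition in_G (t : 'I_m -> C) : Prop :=
  (forall i, t i != 0) /\ forall k : 'I_5, \prod_(i < m) t i ^ (M k i) = 1.

Definition act (t x : 'I_m -> C) : 'I_m -> C := fun i => t i * x i.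

Definition G_invariant (A : ('I_m -> C) -> Prop) : Prop :=
  forall t x, in_G t -> A x -> A (act t x).

Definition zclosed (A : ('I_m -> C) -> Prop) : Prop :=
  exists F : mpoly.mpoly m C -> Prop,
    forall x, A x <-> (nonexc x /\ forall f, F f -> mpoly.meval x f = 0).

(** Closed subsets of the toric variety X_Sigma = (C^m \ Z) / G correspond
    (via the quotient map, which is submersive) to G-invariant Zariski closed
    subsets of C^m \ Z.  Hence, for a G-invariant S (a subset of X_Sigma
    given by its preimage), its closure in X_Sigma is given by the preimage
    below. *)
Definition tclosure (S : ('I_m -> C) -> Prop) : ('I_m -> C) -> Prop :=
  fun x => nonexc x /\
    forall A, zclosed A -> G_invariant A -> (forall y, S y -> A y) -> A x.

End Toric.

(** 1-based access to Cox coordinates. *)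
Definition cx (n : nat) (x : 'I_n.+1 -> C) (k : nat) : C := x (inord k.-1).

Definition p1 (psi : C) (x : 'I_12 -> C) : C :=
  cx x 1 ^+ 3 * cx x 7 ^+ 3 + cx x 2 ^+ 3 * cx x 8 ^+ 3 + cx x 3 ^+ 3 * cx x 9 ^+ 3
  + psi * (cx x 1 * cx x 2 * cx x 3 * cx x 4 * cx x 5 * cx x 6).
Definition p2 (psi : C) (x : 'I_12 -> C) : C :=
  cx x 4 ^+ 3 * cx x 10 ^+ 3 + cx x 5 ^+ 3 * cx x 11 ^+ 3 + cx x 6 ^+ 3 * cx x 12 ^+ 3
  + psi * (cx x 7 * cx x 8 * cx x 9 * cx x 10 * cx x 11 * cx x 12).
Definition Y_BB (psi : C) (x : 'I_12 -> C) : Prop :=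
  nonexc Lambda x /\ p1 psi x = 0 /\ p2 psi x = 0.

Definition q1 (psi : C) (y : 'I_6 -> C) : C :=
  cx y 1 ^+ 3 + cx y 2 ^+ 3 + cx y 3 ^+ 3 + psi * (cx y 4 * cx y 5 * cx y 6).
Definition q2 (psi : C) (y : 'I_6 -> C) : C :=
  psi * (cx y 1 * cx y 2 * cx y 3) + cx y 4 ^+ 3 + cx y 5 ^+ 3 + cx y 6 ^+ 3.
Definition Y_LT (psi : C) (y : 'I_6 -> C) : Prop :=
  nonexc Wm y /\ q1 psi y = 0 /\ q2 psi y = 0.

(** The j-th column of W is the (iota j)-th column of Lambda
    (1-based: 1,2,3,4,5,6 |-> 7,8,9,4,5,6). *)
Definition iota (j : 'I_6) : 'I_12 := inord (nth 0%N [:: 6; 7; 8; 3; 4; 5]%N j).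

(** The toric morphism phi : XX -> X (identity on N) in Cox coordinates.
    Writing v_1 = w_1 + (w_4+w_5+w_6)/3, ..., v_10 = w_4 + (w_1+w_2+w_3)/3, ...,
    a lift of phi is y_j = x_{iota j} * prod_e x_e^{c_{ej}} with fractional
    exponents; it is well defined on G-orbits for any choice of cube roots
    a^3 = x10 x11 x12, b^3 = x1 x2 x3. *)
Definition phi_lift (x : 'I_12 -> C) (a b : C) : 'I_6 -> C :=
  fun j => nth 0 [:: cx x 1 * cx x 7 * a; cx x 2 * cx x 8 * a; cx x 3 * cx x 9 * a;
                    cx x 10 * cx x 4 * b; cx x 11 * cx x 5 * b; cx x 12 * cx x 6 * b] j.

Definition phi_preimage (T : ('I_6 -> C) -> Prop) (x : 'I_12 -> C) : Prop :=
  nonexc Lambda x /\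
  exists a b : C, a ^+ 3 = cx x 10 * cx x 11 * cx x 12 /\
                  b ^+ 3 = cx x 1 * cx x 2 * cx x 3 /\ T (phi_lift x a b).

(** The open set U of X over which phi is an isomorphism: the union of the
    torus orbits O(tau) for the cones tau of the fan of X that are also cones
    of the fan of XX.  The orbit of [y] is O(cone(w_j : y_j = 0)). *)
Definition U_iso (y : 'I_6 -> C) : Prop :=
  nonexc Wm y /\ face_set Lambda [set iota j | j in [set j | y j == 0]].

Definition strict_transform (Y : ('I_6 -> C) -> Prop) : ('I_12 -> C) -> Prop :=
  tclosure Lambda (phi_preimage (fun y => U_iso y /\ Y y)).

(* Let psi <> 0.  The variety Y_BB is Zariski closed and invariant under the
   quasi-torus of XX, and it contains phi^-1(Y_LT /\ U): on a Cox lift,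
   q1(phi x) = a^3 p1(x) and q2(phi x) = b^3 p2(x) with a^3 = x10 x11 x12 and
   b^3 = x1 x2 x3, and over U the faces of Delta force a, b <> 0.  Hence the
   strict transform lies in Y_BB.  Conversely, the torus points of Y_BB lie in
   phi^-1(Y_LT /\ U) and are dense in Y_BB for the Euclidean topology: at a
   point of Y_BB the faces of Delta provide a pair x_k, x_(k+6) with k <= 3 and
   a pair with 4 <= k <= 6 of nonzero coordinates, so p1 and p2 are cubics with
   nonzero leading coefficient in x_k resp. x_(k+6), whose roots move
   continuously with the other coordinates.  Polynomials being continuous, the
   closure of the torus points contains all of Y_BB. *)

From Pilot Require Import Defs.
From mathcomp Require Import all_boot all_order all_algebra.
From mathcomp Require Import complex Rstruct ring lra zify.
From mathcomp Require Import mpoly.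
From Stdlib Require Import FunctionalExtensionality.
Import Order.TTheory GRing.Theory Num.Theory.
Set Implicit Arguments. Unset Strict Implicit. Unset Printing Implicit Defensive.
Local Open Scope ring_scope.

Definition cnorm (z : C) : RR := ComplexField.Normc.normc z.

Lemma cnorm_ge0 z : 0 <= cnorm z.
Proof. by case: z => a b; rewrite /cnorm /ComplexField.Normc.normc sqrtr_ge0. Qed.

Lemma cnorm0 : cnorm 0 = 0.
Proof. exact: ComplexField.Normc.normc0. Qed.

Lemma cnormM a b : cnorm (a * b) = cnorm a * cnorm b.
Proof. exact: ComplexField.Normc.normcM. Qed.

Lemma cnormN a : cnorm (- a) = cnorm a.
Proof. exact: normcN. Qed.

Lemma cnormB a b : cnorm (a - b) = cnorm (b - a).
Proof. by rewrite -cnormN opprB. Qed.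

Lemma ler_cnormD a b : cnorm (a + b) <= cnorm a + cnorm b.
Proof. exact: le_normcD. Qed.

Lemma lerB_cnormB a b : cnorm a - cnorm (a - b) <= cnorm b.
Proof. by rewrite lerBlDr -{1}[a](subrK b) addrC ler_cnormD. Qed.

Lemma cnorm_gt0 z : (0 < cnorm z) = (z != 0).
Proof.
rewrite lt_neqAle cnorm_ge0 andbT eq_sym; apply/idP/idP; apply: contra.
  by move/eqP->; rewrite cnorm0.
by move/eqP/ComplexField.Normc.eq0_normc->.
Qed.

Lemma cnorm_real (r : RR) : cnorm (r%:C)%C = `|r|.
Proof. by rewrite /cnorm /ComplexField.Normc.normc /= expr0n addr0 sqrtr_sqr. Qed.

Lemma root_near_of_small_value (p : {poly C}) (x0 : C) (d : RR) : 0 <= d ->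
  cnorm p.[x0] < cnorm (lead_coef p) * d ^+ (size p).-1 ->
  exists2 r, root p r & cnorm (r - x0) < d.
Proof.
move=> d_ge0 small_px0; have [rs def_p] := closed_field_poly_normal p.
have p_neq0 : p != 0.
  by apply: contraTneq small_px0 => ->; rewrite horner0 lead_coef0 cnorm0 mul0r ltxx.
have size_rs : size rs = (size p).-1.
  by rewrite def_p size_scale ?size_prod_XsubC // lead_coef_eq0.
have [/hasP[r rs_r near_r] | /hasPn far] := boolP (has (fun r => cnorm (r - x0) < d) rs).
  by exists r => //; rewrite def_p rootZ ?lead_coef_eq0 // root_prod_XsubC.
suff : cnorm (lead_coef p) * d ^+ (size p).-1 <= cnorm p.[x0] by rewrite leNgt small_px0.
rewrite -size_rs {2}def_p hornerZ horner_prod cnormM ler_wpM2l ?cnorm_ge0 //.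
elim: rs far {def_p size_rs} => [|r rs IHrs] far.
  by rewrite big_nil /cnorm ComplexField.Normc.normc1.
rewrite big_cons cnormM exprS hornerXsubC cnormB ler_pM ?exprn_ge0 //.
  by rewrite leNgt far // inE eqxx.
by apply: IHrs => s rs_s; apply: far; rewrite inE rs_s orbT.
Qed.

(** * Functions Lipschitz at a point, and moving roots of cubics *)

Section LocalAnalysis.
Variables (n : nat) (x : 'I_n -> C).

Definition near (d : RR) (z : 'I_n -> C) : Prop := forall i, cnorm (z i - x i) <= d.

(* Only displacements of size at most 1 are tested, so polynomials qualify. *)
Definition lipschitz_at (g : ('I_n -> C) -> C) : Prop :=
  exists2 K : RR, 0 <= K &
    forall z d, 0 <= d <= 1 -> near d z -> cnorm (g z - g x) <= K * d.

Lemma near_le z d d' : d <= d' -> near d z -> near d' z.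
Proof. by move=> le_dd' near_z i; apply: le_trans le_dd'. Qed.

Lemma eq_lipschitz_at g h : g =1 h -> lipschitz_at g -> lipschitz_at h.
Proof. by move=> eq_gh [K K_ge0 HK]; exists K => // z d; rewrite -!eq_gh; apply: HK. Qed.

Lemma lipschitz_at_cst c : lipschitz_at (fun=> c).
Proof. by exists 0 => // z d _ _; rewrite subrr cnorm0 mul0r. Qed.

Lemma lipschitz_at_coord i : lipschitz_at (fun z => z i).
Proof. by exists 1 => // z d _ near_z; rewrite mul1r. Qed.

Lemma lipschitz_atD g h : lipschitz_at g -> lipschitz_at h ->
  lipschitz_at (fun z => g z + h z).
Proof.
move=> [Kg Kg_ge0 Hg] [Kh Kh_ge0 Hh]; exists (Kg + Kh) => [|z d d01 near_z].
  by rewrite addr_ge0.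
rewrite opprD addrACA mulrDl (le_trans (ler_cnormD _ _)) // lerD //.
  exact: Hg.
exact: Hh.
Qed.

Lemma lipschitz_atM g h : lipschitz_at g -> lipschitz_at h ->
  lipschitz_at (fun z => g z * h z).
Proof.
move=> [Kg Kg_ge0 Hg] [Kh Kh_ge0 Hh].
exists ((cnorm (g x) + Kg) * Kh + cnorm (h x) * Kg) => [|z d d01 near_z].
  by rewrite addr_ge0 ?mulr_ge0 ?addr_ge0 ?cnorm_ge0.
have [dg dh] := (Hg z d d01 near_z, Hh z d d01 near_z).
have gz_le : cnorm (g z) <= cnorm (g x) + Kg.
  rewrite -[g z](subrK (g x)) addrC (le_trans (ler_cnormD _ _)) // lerD //.
  by rewrite (le_trans dg) // ler_piMr //; case/andP: d01.
have -> : g z * h z - g x * h x = g z * (h z - h x) + h x * (g z - g x) by ring.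
rewrite (le_trans (ler_cnormD _ _)) // !cnormM mulrDl -!mulrA lerD //.
  by apply: ler_pM; rewrite ?cnorm_ge0.
by rewrite ler_wpM2l ?cnorm_ge0.
Qed.

Lemma lipschitz_atXn g k : lipschitz_at g -> lipschitz_at (fun z => g z ^+ k).
Proof.
move=> Lg; elim: k => [|k IHk].
  by apply: eq_lipschitz_at (lipschitz_at_cst 1) => z; rewrite expr0.
by apply: eq_lipschitz_at (lipschitz_atM Lg IHk) => z; rewrite exprS.
Qed.

Lemma lipschitz_at_sum (I : Type) (s : seq I) (F : I -> ('I_n -> C) -> C) :
  (forall i, lipschitz_at (F i)) -> lipschitz_at (fun z => \sum_(i <- s) F i z).
Proof.
move=> LF; elim: s => [|i s IHs].
  by apply: eq_lipschitz_at (lipschitz_at_cst 0) => z; rewrite big_nil.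
by apply: eq_lipschitz_at (lipschitz_atD (LF i) IHs) => z; rewrite big_cons.
Qed.

Lemma lipschitz_at_prod (I : Type) (s : seq I) (F : I -> ('I_n -> C) -> C) :
  (forall i, lipschitz_at (F i)) -> lipschitz_at (fun z => \prod_(i <- s) F i z).
Proof.
move=> LF; elim: s => [|i s IHs].
  by apply: eq_lipschitz_at (lipschitz_at_cst 1) => z; rewrite big_nil.
by apply: eq_lipschitz_at (lipschitz_atM (LF i) IHs) => z; rewrite big_cons.
Qed.

Lemma lipschitz_at_meval (f : {mpoly C[n]}) : lipschitz_at (fun z => f.@[z]).
Proof.
apply: eq_lipschitz_at (fun z => esym (mevalE z f)) _.
apply: lipschitz_at_sum => m; apply: lipschitz_atM; first exact: lipschitz_at_cst.
by apply: lipschitz_at_prod => i; apply: lipschitz_atXn; apply: lipschitz_at_coord.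
Qed.

Lemma lipschitz_at_cont g : lipschitz_at g -> forall e, 0 < e ->
  exists2 eta, 0 < eta & forall z, near eta z -> cnorm (g z - g x) <= e.
Proof.
move=> [K K_ge0 HK] e e_gt0.
have K1_gt0 : 0 < K + 1 by rewrite ltr_wpDl.
exists (Order.min 1 (e / (K + 1))) => [|z near_z]; first by rewrite lt_min ltr01 divr_gt0.
set eta := Order.min _ _ in near_z.
have eta_ge0 : 0 <= eta by rewrite le_min ler01 divr_ge0 ?ltW.
rewrite (le_trans (HK z eta _ near_z)) ?eta_ge0 ?ge_min ?lexx //.
rewrite (@le_trans _ _ ((K + 1) * eta)) ?ler_wpM2r ?lerDl //.
by rewrite -ler_pdivlMl // mulrC ge_min lexx orbT.
Qed.

Lemma lipschitz_at_eq0 g : lipschitz_at g ->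
  (forall d, 0 < d -> exists2 z, near d z & g z = 0) -> g x = 0.
Proof.
move=> Lg zeros; apply/eqP/contraT; rewrite -cnorm_gt0 => gx_gt0.
have [eta eta_gt0 cont_g] := lipschitz_at_cont Lg (divr_gt0 gx_gt0 (ltr0Sn _ 1)).
have [z /cont_g + gz0] := zeros eta eta_gt0.
rewrite gz0 sub0r cnormN; lra.
Qed.

Lemma cubic_root_near (a b c : ('I_n -> C) -> C) (x0 : C) :
  lipschitz_at a -> lipschitz_at b -> lipschitz_at c ->
  a x != 0 -> x0 != 0 -> a x * x0 ^+ 3 + b x * x0 + c x = 0 ->
  forall d, 0 < d -> exists2 eta, 0 < eta & forall z, near eta z ->
    exists r, [/\ a z * r ^+ 3 + b z * r + c z = 0, cnorm (r - x0) <= d & r != 0].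
Proof.
move=> La Lb Lc; rewrite -!cnorm_gt0 => ax_gt0 x0_gt0 root_x0 d d_gt0.
pose d' := Order.min d (cnorm x0 / 2).
have d'_gt0 : 0 < d' by rewrite lt_min d_gt0 divr_gt0 ?ltr0n.
have d'3_gt0 : 0 < d' ^+ 3 by rewrite exprn_gt0.
pose h z := a z * x0 ^+ 3 + b z * x0 + c z.
have Lh : lipschitz_at h.
  by apply: lipschitz_atD (lipschitz_atD (lipschitz_atM La (lipschitz_at_cst _))
    (lipschitz_atM Lb (lipschitz_at_cst _))) Lc.
have [eta_a eta_a_gt0 cont_a] := lipschitz_at_cont La (divr_gt0 ax_gt0 (ltr0Sn _ 1)).
have e_h_gt0 : 0 < cnorm (a x) * d' ^+ 3 / 4 by rewrite !divr_gt0 ?mulr_gt0 ?ltr0n.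
have [eta_h eta_h_gt0 cont_h] := lipschitz_at_cont Lh e_h_gt0.
exists (Order.min eta_a eta_h) => [|z near_z]; first by rewrite lt_min eta_a_gt0.
have near_a : near eta_a z by apply: near_le near_z; rewrite ge_min lexx.
have near_h : near eta_h z by apply: near_le near_z; rewrite ge_min lexx orbT.
have := cont_a z near_a; have := cont_h z near_h.
rewrite /h root_x0 subr0 cnormB => hz_small az_close.
have az_large : cnorm (a x) / 2 <= cnorm (a z) by have := lerB_cnormB (a x) (a z); lra.
have az_neq0 : a z != 0 by rewrite -cnorm_gt0 (lt_le_trans _ az_large) // divr_gt0.
pose P : {poly C} := a z *: 'X^3 + (b z *: 'X + (c z)%:P).
have sizeP_lt : (size (b z *: 'X + (c z)%:P)%R < size (a z *: 'X^3 : {poly C}))%N.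
  rewrite size_scale // size_polyXn (leq_ltn_trans (size_polyD _ _)) //.
  by rewrite gtn_max (leq_ltn_trans (size_scale_leq _ _)) ?size_polyX //
    (leq_ltn_trans (size_polyC_leq1 _)).
have sizeP : size P = 4%N by rewrite size_polyDl // size_scale // size_polyXn.
have leadP : lead_coef P = a z by rewrite lead_coefDl // lead_coefZ lead_coefXn mulr1.
have hornerP y : P.[y] = a z * y ^+ 3 + b z * y + c z by rewrite !hornerE.
have [|r /rootP] := @root_near_of_small_value P x0 d' (ltW d'_gt0).
  rewrite sizeP leadP hornerP (le_lt_trans hz_small) //.
  by rewrite (lt_le_trans _ (ler_wpM2r (ltW d'3_gt0) az_large)) // mulrAC ltr_pM2r //; lra.
rewrite hornerP => root_r near_r; exists r; split=> //.
  by rewrite (le_trans (ltW near_r)) // ge_min lexx.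
apply: contraTneq near_r => ->; rewrite sub0r cnormN -leNgt ge_min.
by apply/orP; right; lra.
Qed.

Definition cubic_in (f : ('I_n -> C) -> C) (k : 'I_n) : Prop :=
  exists a b c, [/\ forall z X, f [eta z with k |-> X] = a z * X ^+ 3 + b z * X + c z,
    lipschitz_at a, lipschitz_at b, lipschitz_at c & a x != 0].

Lemma near_eta_with d z k r : near d z -> cnorm (r - x k) <= d ->
  near d [eta z with k |-> r].
Proof. by move=> near_z near_r i /=; case: eqP => [->|]. Qed.

Lemma cubic_in_root_near f k : cubic_in f k -> x k != 0 -> f x = 0 ->
  forall d, 0 < d -> exists2 eta, 0 < eta & forall z, near eta z ->
    exists r, [/\ f [eta z with k |-> r] = 0, cnorm (r - x k) <= d & r != 0].
Proof.
move=> [a [b [c [fE La Lb Lc ax_neq0]]]] xk_neq0 fx0 d d_gt0.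
have root_xk : a x * x k ^+ 3 + b x * x k + c x = 0.
  rewrite -fE -fx0; congr f; apply: functional_extensionality => i /=.
  by case: eqP => [->|].
have [eta eta_gt0 near_root] := cubic_root_near La Lb Lc ax_neq0 xk_neq0 root_xk d_gt0.
by exists eta => // z /near_root[r [root_r near_r r_neq0]]; exists r; rewrite fE.
Qed.

(* Move the vanishing coordinates of x slightly off 0, then restore f = 0 by
   moving coordinate k1 and g = 0 by moving coordinate k2, which f ignores. *)
Lemma near_common_zero_torus f g k1 k2 :
  cubic_in f k1 -> cubic_in g k2 -> (forall z X, f [eta z with k2 |-> X] = f z) ->
  x k1 != 0 -> x k2 != 0 -> f x = 0 -> g x = 0 ->
  forall d, 0 < d -> exists2 z, near d z & [/\ forall i, z i != 0, f z = 0 & g z = 0].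
Proof.
move=> f_cubic g_cubic f_indep xk1_neq0 xk2_neq0 fx0 gx0 d d_gt0.
have [eta2 eta2_gt0 root_g] := cubic_in_root_near g_cubic xk2_neq0 gx0 d_gt0.
pose d1 := Order.min d eta2.
have d1_gt0 : 0 < d1 by rewrite lt_min d_gt0.
have [eta1 eta1_gt0 root_f] := cubic_in_root_near f_cubic xk1_neq0 fx0 d1_gt0.
pose tau := Order.min d1 eta1.
have tau_gt0 : 0 < tau by rewrite lt_min d1_gt0.
pose w i : C := if x i == 0 then (tau%:C)%C else x i.
have w_neq0 i : w i != 0.
  by rewrite /w; case: (eqVneq (x i) 0) => // _; rewrite -cnorm_gt0 cnorm_real gtr0_norm.
have near_w : near tau w.
  move=> i; rewrite /w; case: (eqVneq (x i) 0) => [->|_]; last by rewrite subrr cnorm0 ltW.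
  by rewrite subr0 cnorm_real gtr0_norm.
have [r1 [fr1 near_r1 r1_neq0]] : exists r,
    [/\ f [eta w with k1 |-> r] = 0, cnorm (r - x k1) <= d1 & r != 0].
  by apply: root_f; apply: near_le near_w; rewrite ge_min lexx orbT.
pose z1 := [eta w with k1 |-> r1].
have near_z1 : near d1 z1.
  by apply: near_eta_with near_r1; apply: near_le near_w; rewrite ge_min lexx.
have [r2 [gr2 near_r2 r2_neq0]] : exists r,
    [/\ g [eta z1 with k2 |-> r] = 0, cnorm (r - x k2) <= d & r != 0].
  by apply: root_g; apply: near_le near_z1; rewrite ge_min lexx orbT.
exists [eta z1 with k2 |-> r2].
  by apply: near_eta_with near_r2; apply: near_le near_z1; rewrite ge_min lexx.
split=> //; last by rewrite f_indep.
by move=> i /=; case: ifP => // _; case: ifP.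
Qed.

End LocalAnalysis.

Lemma face_set0 m (M : 'M[int]_(5, m)) : face_set M set0.
Proof.
by exists (fun=> 0); split=> [i|i _]; rewrite ?inE // big1 ?ltr01 // => k _; rewrite mul0r.
Qed.

Lemma nonexc_torus m (M : 'M[int]_(5, m)) (x : 'I_m -> C) :
  (forall i, x i != 0) -> nonexc M x.
Proof.
move=> x_neq0; exists set0; split=> [|i /eqP]; first exact: face_set0.
by rewrite (negbTE (x_neq0 i)).
Qed.

Lemma nonexc_act m (M : 'M[int]_(5, m)) t x : in_G M t -> nonexc M x -> nonexc M (act t x).
Proof.
move=> [t_neq0 _] [I [faceI zeros_in_I]]; exists I; split=> // i /eqP.
by rewrite mulf_eq0 (negbTE (t_neq0 i)) => /eqP/zeros_in_I.
Qed.

(* Zariski closed sets are closed for the Euclidean topology. *)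
Lemma tclosure_near m (M : 'M[int]_(5, m)) (S : ('I_m -> C) -> Prop) x :
  nonexc M x -> (forall d, 0 < d -> exists2 z, near x d z & S z) -> tclosure M S x.
Proof.
move=> nonexc_x near_S; split=> // A [F defA] _ S_sub_A; apply/defA; split=> // f Ff.
apply: (lipschitz_at_eq0 (lipschitz_at_meval x f)) => d /near_S[z near_z Sz].
by exists z => //; have /defA[_ ->] := S_sub_A z Sz.
Qed.

(** * Faces of Delta *)

(* Column [inord i] of Lambda is v_(i+1) in the 1-based numbering of the paper. *)
Definition face_value (u : 'I_5 -> RR) (i : 'I_12) : RR :=
  \sum_(k < 5) u k * (Lambda k i)%:~R.

Ltac face_value_expand :=
  rewrite /face_value !big_ord_recr !big_ord0 /= !mxE /= ?inordK //=.

(* The columns satisfy v_i - v_(i+6) = (-1,-1,-1,1,1) for i <= 6,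
   v_1 + v_2 + v_3 = 0 and v_10 + v_11 + v_12 = 0. *)
Lemma face_value_shift u i : (i < 6)%N ->
  face_value u (inord i) - face_value u (inord (i + 6)) =
  face_value u (inord 0) - face_value u (inord 6).
Proof. by case: i => [|[|[|[|[|[|//]]]]]] _; face_value_expand; lra. Qed.

Lemma face_value_sum_low u :
  face_value u (inord 0) + face_value u (inord 1) + face_value u (inord 2) = 0.
Proof. by face_value_expand; lra. Qed.

Lemma face_value_sum_high u :
  face_value u (inord 9) + face_value u (inord 10) + face_value u (inord 11) = 0.
Proof. by face_value_expand; lra. Qed.

Lemma face_setP (I : {set 'I_12}) : face_set Lambda I ->
  exists u, (forall i, i \in I -> face_value u i = 1) /\ (forall i, face_value u i <= 1).
Proof.
move=> [u [on_I off_I]]; exists u; split=> // i.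
by rewrite /face_value; case: (boolP (i \in I)) => [/on_I->|/off_I/ltW].
Qed.

(* A face through some v_j, j <= 6, makes the shift of face_value_shift
   nonnegative, hence face_value >= 1 at v_1, v_2, v_3, whose sum is 0. *)
Lemma face_meets_low_pairs (I : {set 'I_12}) : face_set Lambda I ->
  (forall k, (k < 3)%N -> inord k \in I \/ inord (k + 6) \in I) ->
  forall j, (j < 6)%N -> inord j \notin I.
Proof.
move=> /face_setP[u [on_I le1]] meets j j_lt6; apply/negP => j_in_I.
have shift_ge0 : 0 <= face_value u (inord 0) - face_value u (inord 6).
  by rewrite -(face_value_shift u j_lt6) on_I // subr_ge0.
have ge1 k : (k < 3)%N -> 1 <= face_value u (inord k).
  move=> k_lt3; case: (meets k k_lt3) => [/on_I-> // | /on_I on_k6].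
  have k_lt6 : (k < 6)%N by lia.
  by have := face_value_shift u k_lt6; rewrite on_k6; lra.
have := face_value_sum_low u; have := ge1 0%N isT; have := ge1 1%N isT.
by have := ge1 2%N isT; lra.
Qed.

Lemma face_meets_high_pairs (I : {set 'I_12}) : face_set Lambda I ->
  (forall k, (k < 3)%N -> inord (k + 3) \in I \/ inord (k + 9) \in I) ->
  forall j, (6 <= j < 12)%N -> inord j \notin I.
Proof.
move=> /face_setP[u [on_I le1]] meets j j_range; apply/negP => j_in_I.
have shift_le0 : face_value u (inord 0) - face_value u (inord 6) <= 0.
  have j6_lt6 : (j - 6 < 6)%N by lia.
  rewrite -(face_value_shift u j6_lt6) subnK; last by lia.
  by rewrite (on_I _ j_in_I) subr_le0.
have ge1 k : (k < 3)%N -> 1 <= face_value u (inord (k + 9)).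
  move=> k_lt3; case: (meets k k_lt3) => [/on_I on_k3 | /on_I-> //].
  have k3_lt6 : (k + 3 < 6)%N by lia.
  by have := face_value_shift u k3_lt6; rewrite -addnA on_k3; lra.
have := face_value_sum_high u; have := ge1 0%N isT; have := ge1 1%N isT.
by have := ge1 2%N isT; lra.
Qed.

Lemma p1_nonvanishing_pair psi x : psi != 0 -> nonexc Lambda x -> p1 psi x = 0 ->
  exists2 k, (k < 3)%N & x (inord k) != 0 /\ x (inord (k + 6)) != 0.
Proof.
move=> psi_neq0 [I [faceI zeros_in_I]] p1x0.
have [/existsP[k /andP[]] | /existsPn no_pair] :=
  boolP [exists k : 'I_3, (x (inord k) != 0) && (x (inord (k + 6)) != 0)].
  by exists k.
have {}no_pair k : (k < 3)%N -> x (inord k) = 0 \/ x (inord (k + 6)) = 0.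
  move=> k_lt3; move: (no_pair (Ordinal k_lt3)).
  by rewrite negb_and !negbK => /orP[]/eqP; [left|right].
have low_neq0 j : (j < 6)%N -> x (inord j) != 0.
  move=> j_lt6; apply: contraNneq (face_meets_low_pairs faceI _ j_lt6) => [/zeros_in_I //|].
  by move=> k /no_pair[]/zeros_in_I; [left|right].
have high_eq0 k : (k < 3)%N -> x (inord (k + 6)) = 0.
  move=> k_lt3; case: (no_pair k k_lt3) => // /eqP.
  by rewrite (negbTE (low_neq0 k _)) //; lia.
suff : p1 psi x != 0 by rewrite p1x0 eqxx.
rewrite /p1 /cx /= (high_eq0 0%N) // (high_eq0 1%N) // (high_eq0 2%N) //.
by rewrite expr0n !mulr0 !add0r !mulf_neq0 ?low_neq0.
Qed.

Lemma p2_nonvanishing_pair psi x : psi != 0 -> nonexc Lambda x -> p2 psi x = 0 ->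
  exists2 k, (k < 3)%N & x (inord (k + 3)) != 0 /\ x (inord (k + 9)) != 0.
Proof.
move=> psi_neq0 [I [faceI zeros_in_I]] p2x0.
have [/existsP[k /andP[]] | /existsPn no_pair] :=
  boolP [exists k : 'I_3, (x (inord (k + 3)) != 0) && (x (inord (k + 9)) != 0)].
  by exists k.
have {}no_pair k : (k < 3)%N -> x (inord (k + 3)) = 0 \/ x (inord (k + 9)) = 0.
  move=> k_lt3; move: (no_pair (Ordinal k_lt3)).
  by rewrite negb_and !negbK => /orP[]/eqP; [left|right].
have high_neq0 j : (6 <= j < 12)%N -> x (inord j) != 0.
  move=> j_range; apply: contraNneq (face_meets_high_pairs faceI _ j_range).
    by move/zeros_in_I.
  by move=> k /no_pair[]/zeros_in_I; [left|right].
have low_eq0 k : (k < 3)%N -> x (inord (k + 3)) = 0.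
  move=> k_lt3; case: (no_pair k k_lt3) => // /eqP.
  by rewrite (negbTE (high_neq0 (k + 9)%N _)) //; lia.
suff : p2 psi x != 0 by rewrite p2x0 eqxx.
rewrite /p2 /cx /= (low_eq0 0%N) // (low_eq0 1%N) // (low_eq0 2%N) //.
by rewrite expr0n !mul0r !add0r !mulf_neq0 ?high_neq0.
Qed.

(** * The map phi *)

Lemma phi_liftE x a b j : (j < 6)%N ->
  phi_lift x a b (inord j) = nth 0 [:: cx x 1 * cx x 7 * a; cx x 2 * cx x 8 * a;
    cx x 3 * cx x 9 * a; cx x 10 * cx x 4 * b; cx x 11 * cx x 5 * b;
    cx x 12 * cx x 6 * b] j.
Proof. by move=> j_lt6; rewrite /phi_lift inordK. Qed.

(* If a = 0, then y_1, y_2, y_3 and one of y_4, y_5, y_6 vanish, so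
   v_7, v_8, v_9 and one of v_4, v_5, v_6 would lie on a common face;
   b = 0 is symmetric. *)
Lemma phi_lift_cube_roots_neq0 x a b :
  face_set Lambda [set Defs.iota j | j in [set j | phi_lift x a b j == 0]] ->
  a ^+ 3 = cx x 10 * cx x 11 * cx x 12 -> b ^+ 3 = cx x 1 * cx x 2 * cx x 3 ->
  a != 0 /\ b != 0.
Proof.
set I := [set Defs.iota j | j in _] => faceI a3 b3.
have in_I j : (j < 6)%N -> phi_lift x a b (inord j) = 0 ->
    inord (nth 0%N [:: 6; 7; 8; 3; 4; 5] j) \in I.
  move=> j_lt6 yj0; apply/imsetP; exists (inord j); first by rewrite inE yj0.
  by rewrite /Defs.iota inordK.
split; apply/eqP => root0.
- have meets k : (k < 3)%N -> inord k \in I \/ inord (k + 6) \in I.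
    case: k => [|[|[|//]]] _; right;
      [apply: (in_I 0%N) | apply: (in_I 1%N) | apply: (in_I 2%N)];
      by rewrite // phi_liftE //= root0 mulr0.
  have far := face_meets_low_pairs faceI meets.
  move: a3; rewrite root0 expr0n /= => /esym/eqP; rewrite !mulf_eq0 -!orbA.
  case/or3P => /eqP x_eq0.
  + by move: (far 3%N isT); rewrite (in_I 3%N) // phi_liftE //= x_eq0 !mul0r.
  + by move: (far 4%N isT); rewrite (in_I 4%N) // phi_liftE //= x_eq0 !mul0r.
  + by move: (far 5%N isT); rewrite (in_I 5%N) // phi_liftE //= x_eq0 !mul0r.
- have meets k : (k < 3)%N -> inord (k + 3) \in I \/ inord (k + 9) \in I.
    case: k => [|[|[|//]]] _; left;
      [apply: (in_I 3%N) | apply: (in_I 4%N) | apply: (in_I 5%N)];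
      by rewrite // phi_liftE //= root0 mulr0.
  have far := face_meets_high_pairs faceI meets.
  move: b3; rewrite root0 expr0n /= => /esym/eqP; rewrite !mulf_eq0 -!orbA.
  case/or3P => /eqP x_eq0.
  + by move: (far 6%N isT); rewrite (in_I 0%N) // phi_liftE //= x_eq0 !mul0r.
  + by move: (far 7%N isT); rewrite (in_I 1%N) // phi_liftE //= x_eq0 !mul0r.
  + by move: (far 8%N isT); rewrite (in_I 2%N) // phi_liftE //= x_eq0 !mul0r.
Qed.

Lemma q1_phi_lift psi x a b : a ^+ 3 = cx x 10 * cx x 11 * cx x 12 ->
  b ^+ 3 = cx x 1 * cx x 2 * cx x 3 -> q1 psi (phi_lift x a b) = a ^+ 3 * p1 psi x.
Proof.
move=> a3 b3; transitivity (a ^+ 3 * (p1 psi x - psi * (cx x 1 * cx x 2 * cx x 3 *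
    cx x 4 * cx x 5 * cx x 6)) + psi * (cx x 4 * cx x 5 * cx x 6) *
    (cx x 10 * cx x 11 * cx x 12) * b ^+ 3).
  by rewrite /q1 /p1 {1 2 3 4 5 6}/cx /phi_lift /= !inordK //=; ring.
by rewrite -a3 b3; ring.
Qed.

Lemma q2_phi_lift psi x a b : a ^+ 3 = cx x 10 * cx x 11 * cx x 12 ->
  b ^+ 3 = cx x 1 * cx x 2 * cx x 3 -> q2 psi (phi_lift x a b) = b ^+ 3 * p2 psi x.
Proof.
move=> a3 b3; transitivity (b ^+ 3 * (p2 psi x - psi * (cx x 7 * cx x 8 * cx x 9 *
    cx x 10 * cx x 11 * cx x 12)) + psi * (cx x 7 * cx x 8 * cx x 9) *
    (cx x 1 * cx x 2 * cx x 3) * a ^+ 3).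
  by rewrite /q2 /p2 {1 2 3 4 5 6}/cx /phi_lift /= !inordK //=; ring.
by rewrite a3 -b3; ring.
Qed.

Lemma Y_BB_of_phi_preimage psi x :
  phi_preimage (fun y => U_iso y /\ Y_LT psi y) x -> Y_BB psi x.
Proof.
move=> [nonexc_x [a [b [a3 [b3 [[_ faceU] [_ [q1_eq0 q2_eq0]]]]]]]].
have [a_neq0 b_neq0] := phi_lift_cube_roots_neq0 faceU a3 b3.
split=> //; split; apply/eqP.
  by move: q1_eq0; rewrite q1_phi_lift // => /eqP; rewrite mulf_eq0 expf_eq0 /= (negbTE a_neq0).
by move: q2_eq0; rewrite q2_phi_lift // => /eqP; rewrite mulf_eq0 expf_eq0 /= (negbTE b_neq0).
Qed.

Lemma phi_preimage_of_torus_Y_BB psi x : (forall i, x i != 0) ->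
  p1 psi x = 0 -> p2 psi x = 0 -> phi_preimage (fun y => U_iso y /\ Y_LT psi y) x.
Proof.
move=> x_neq0 p1x0 p2x0.
have cx_neq0 k : cx x k != 0 by apply: x_neq0.
pose a := 3.-root (cx x 10 * cx x 11 * cx x 12).
pose b := 3.-root (cx x 1 * cx x 2 * cx x 3).
have a3 : a ^+ 3 = cx x 10 * cx x 11 * cx x 12 by rewrite rootCK.
have b3 : b ^+ 3 = cx x 1 * cx x 2 * cx x 3 by rewrite rootCK.
have a_neq0 : a != 0 by rewrite rootC_eq0 // !mulf_neq0.
have b_neq0 : b != 0 by rewrite rootC_eq0 // !mulf_neq0.
have y_neq0 j : phi_lift x a b j != 0.
  by case: j => [[|[|[|[|[|[|//]]]]]] ?]; rewrite /phi_lift /= !mulf_neq0.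
split; first exact: nonexc_torus.
exists a, b; do 2!split=> //; split; split; try exact: nonexc_torus.
  have -> : [set j | phi_lift x a b j == 0] = set0.
    by apply/setP => j; rewrite !inE (negbTE (y_neq0 j)).
  by rewrite imset0; apply: face_set0.
by rewrite q1_phi_lift // q2_phi_lift // p1x0 p2x0 !mulr0.
Qed.

(** * Y_BB is closed and invariant *)

Lemma ord12_cx (t : 'I_12 -> C) (i : 'I_12) :
  t i = nth 0 [:: cx t 1; cx t 2; cx t 3; cx t 4; cx t 5; cx t 6; cx t 7; cx t 8;
                  cx t 9; cx t 10; cx t 11; cx t 12] i.
Proof.
case: i => [[|[|[|[|[|[|[|[|[|[|[|[|//]]]]]]]]]]]] ?];
  by rewrite /cx; congr t; apply: val_inj; rewrite /= inordK.
Qed.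

Lemma in_G_Lambda_row t (k : 'I_5) : in_G Lambda t ->
  \prod_(i < 12) nth 0 [:: cx t 1; cx t 2; cx t 3; cx t 4; cx t 5; cx t 6; cx t 7;
    cx t 8; cx t 9; cx t 10; cx t 11; cx t 12] i ^ Lambda k i = 1.
Proof.
move=> [_ rowk]; rewrite -[RHS](rowk k).
by apply: eq_bigr => i _; rewrite -ord12_cx.
Qed.

Definition mono_low (x : 'I_12 -> C) :=
  cx x 1 * cx x 2 * cx x 3 * cx x 4 * cx x 5 * cx x 6.

Definition mono_high (x : 'I_12 -> C) :=
  cx x 7 * cx x 8 * cx x 9 * cx x 10 * cx x 11 * cx x 12.

(* Each row of Lambda is the exponent vector of the quotient of two monomials
   of p1 or p2; the sixth relation comes from minus the sum of all rows. *)
Lemma in_G_Lambda_monomials t : in_G Lambda t ->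
  [/\ cx t 1 ^+ 3 * cx t 7 ^+ 3 = mono_low t, cx t 2 ^+ 3 * cx t 8 ^+ 3 = mono_low t
    & cx t 3 ^+ 3 * cx t 9 ^+ 3 = mono_low t] /\
  [/\ cx t 4 ^+ 3 * cx t 10 ^+ 3 = mono_high t, cx t 5 ^+ 3 * cx t 11 ^+ 3 = mono_high t
    & cx t 6 ^+ 3 * cx t 12 ^+ 3 = mono_high t].
Proof.
move=> Gt; have t_neq0 k : cx t k != 0 by case: Gt => t_neq0 _; apply: t_neq0.
have row k (k_lt5 : (k < 5)%N) := in_G_Lambda_row (Ordinal k_lt5) Gt.
move: (row 0%N isT) (row 1%N isT) (row 2%N isT) (row 3%N isT) (row 4%N isT).
rewrite !big_ord_recr !big_ord0 /= !mxE /= -!exprnP !exprN1 ?expr0 !mul1r.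
move=> r0 r1 r2 r3 r4; rewrite /mono_low /mono_high.
do 2 split; [rewrite -[RHS]mulr1 -r0 | rewrite -[RHS]mulr1 -r1 | rewrite -[RHS]mulr1 -r2
  | rewrite -[RHS]mulr1 -r3 | rewrite -[RHS]mulr1 -r4
  | rewrite -[LHS]mulr1 -{1}r0 -{1}r1 -{1}r2 -{1}r3 -{1}r4];
  by field; rewrite !t_neq0.
Qed.

Lemma sum_common_factor (m a1 a2 a3 u1 u2 u3 v : C) : a1 = m -> a2 = m -> a3 = m ->
  a1 * u1 + a2 * u2 + a3 * u3 + m * v = m * (u1 + u2 + u3 + v).
Proof. by move=> -> -> ->; ring. Qed.

Lemma p1_act psi t x : in_G Lambda t -> p1 psi (act t x) = mono_low t * p1 psi x.
Proof.
move=> /in_G_Lambda_monomials[[e1 e2 e3] _].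
by rewrite /p1 -(sum_common_factor _ _ _ _ e1 e2 e3) /mono_low /act /cx; ring.
Qed.

Lemma p2_act psi t x : in_G Lambda t -> p2 psi (act t x) = mono_high t * p2 psi x.
Proof.
move=> /in_G_Lambda_monomials[_ [e1 e2 e3]].
by rewrite /p2 -(sum_common_factor _ _ _ _ e1 e2 e3) /mono_high /act /cx; ring.
Qed.

Lemma Y_BB_G_invariant psi : G_invariant Lambda (Y_BB psi).
Proof.
move=> t x Gt [nonexc_x [p1x0 p2x0]]; split; first exact: nonexc_act.
by rewrite p1_act // p2_act // p1x0 p2x0 !mulr0.
Qed.

Definition Xc (k : nat) : {mpoly C[12]} := 'X_(inord k.-1).

(* Cubes are written as products: rewriting meval through [_ ^+ 3] is very slow. *)
Definition p1_mpoly (psi : C) : {mpoly C[12]} :=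
  Xc 1 * Xc 1 * Xc 1 * Xc 7 * Xc 7 * Xc 7 + Xc 2 * Xc 2 * Xc 2 * Xc 8 * Xc 8 * Xc 8
  + Xc 3 * Xc 3 * Xc 3 * Xc 9 * Xc 9 * Xc 9
  + psi%:MP * (Xc 1 * Xc 2 * Xc 3 * Xc 4 * Xc 5 * Xc 6).

Definition p2_mpoly (psi : C) : {mpoly C[12]} :=
  Xc 4 * Xc 4 * Xc 4 * Xc 10 * Xc 10 * Xc 10 + Xc 5 * Xc 5 * Xc 5 * Xc 11 * Xc 11 * Xc 11
  + Xc 6 * Xc 6 * Xc 6 * Xc 12 * Xc 12 * Xc 12
  + psi%:MP * (Xc 7 * Xc 8 * Xc 9 * Xc 10 * Xc 11 * Xc 12).

Lemma meval_Xc x k : (Xc k).@[x] = cx x k.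
Proof. exact: mevalXU. Qed.

Lemma meval_p1_mpoly psi x : (p1_mpoly psi).@[x] = p1 psi x.
Proof. by rewrite /p1_mpoly !mevalD !mevalM mevalC !meval_Xc /p1; ring. Qed.

Lemma meval_p2_mpoly psi x : (p2_mpoly psi).@[x] = p2 psi x.
Proof. by rewrite /p2_mpoly !mevalD !mevalM mevalC !meval_Xc /p2; ring. Qed.

Lemma Y_BB_zclosed psi : zclosed Lambda (Y_BB psi).
Proof.
exists (fun f => f = p1_mpoly psi \/ f = p2_mpoly psi) => x; split.
  by move=> [nonexc_x [p1x0 p2x0]]; split=> // f [->|->];
    rewrite ?meval_p1_mpoly ?meval_p2_mpoly.
move=> [nonexc_x vanish]; split=> //.
by rewrite -meval_p1_mpoly -meval_p2_mpoly !vanish; [|right|left].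
Qed.

(** * Density of the torus points of Y_BB *)

Lemma cx_eta (z : 'I_12 -> C) k X j : (k < 12)%N -> (j.-1 < 12)%N ->
  cx [eta z with inord k |-> X] j = if j.-1 == k then X else cx z j.
Proof.
by move=> k_lt12 j_lt12; rewrite /cx /= -(inj_eq (@ord_inj _)) /= !inordK.
Qed.

Ltac lipschitz_at_poly :=
  lazymatch goal with
  | |- lipschitz_at _ (fun z => @?g z + @?h z) =>
      apply: (lipschitz_atD (g := g) (h := h)); lipschitz_at_poly
  | |- lipschitz_at _ (fun z => @?g z * @?h z) =>
      apply: (lipschitz_atM (g := g) (h := h)); lipschitz_at_poly
  | |- lipschitz_at _ (fun z => @?g z ^+ _) =>
      apply: (lipschitz_atXn (g := g)); lipschitz_at_poly
  | |- lipschitz_at _ (fun z => cx z _) => exact: lipschitz_at_coord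
  | |- _ => exact: lipschitz_at_cst
  end.

Lemma p1_cubic_in psi x k : (k < 3)%N -> x (inord (k + 6)) != 0 ->
  cubic_in x (p1 psi) (inord k).
Proof.
case: k => [|[|[|//]]] _ partner_neq0.
- exists (fun z => cx z 7 ^+ 3), (fun z => psi * (cx z 2 * cx z 3 * cx z 4 * cx z 5 * cx z 6)),
    (fun z => cx z 2 ^+ 3 * cx z 8 ^+ 3 + cx z 3 ^+ 3 * cx z 9 ^+ 3).
  by split; [move=> z X; rewrite /p1 !cx_eta //=; ring | lipschitz_at_poly.. | rewrite expf_neq0].
- exists (fun z => cx z 8 ^+ 3), (fun z => psi * (cx z 1 * cx z 3 * cx z 4 * cx z 5 * cx z 6)),
    (fun z => cx z 1 ^+ 3 * cx z 7 ^+ 3 + cx z 3 ^+ 3 * cx z 9 ^+ 3).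
  by split; [move=> z X; rewrite /p1 !cx_eta //=; ring | lipschitz_at_poly.. | rewrite expf_neq0].
- exists (fun z => cx z 9 ^+ 3), (fun z => psi * (cx z 1 * cx z 2 * cx z 4 * cx z 5 * cx z 6)),
    (fun z => cx z 1 ^+ 3 * cx z 7 ^+ 3 + cx z 2 ^+ 3 * cx z 8 ^+ 3).
  by split; [move=> z X; rewrite /p1 !cx_eta //=; ring | lipschitz_at_poly.. | rewrite expf_neq0].
Qed.

Lemma p2_cubic_in psi x k : (k < 3)%N -> x (inord (k + 3)) != 0 ->
  cubic_in x (p2 psi) (inord (k + 9)).
Proof.
case: k => [|[|[|//]]] _ partner_neq0.
- exists (fun z => cx z 4 ^+ 3), (fun z => psi * (cx z 7 * cx z 8 * cx z 9 * cx z 11 * cx z 12)),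
    (fun z => cx z 5 ^+ 3 * cx z 11 ^+ 3 + cx z 6 ^+ 3 * cx z 12 ^+ 3).
  by split; [move=> z X; rewrite /p2 !cx_eta //=; ring | lipschitz_at_poly.. | rewrite expf_neq0].
- exists (fun z => cx z 5 ^+ 3), (fun z => psi * (cx z 7 * cx z 8 * cx z 9 * cx z 10 * cx z 12)),
    (fun z => cx z 4 ^+ 3 * cx z 10 ^+ 3 + cx z 6 ^+ 3 * cx z 12 ^+ 3).
  by split; [move=> z X; rewrite /p2 !cx_eta //=; ring | lipschitz_at_poly.. | rewrite expf_neq0].
- exists (fun z => cx z 6 ^+ 3), (fun z => psi * (cx z 7 * cx z 8 * cx z 9 * cx z 10 * cx z 11)),
    (fun z => cx z 4 ^+ 3 * cx z 10 ^+ 3 + cx z 5 ^+ 3 * cx z 11 ^+ 3).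
  by split; [move=> z X; rewrite /p2 !cx_eta //=; ring | lipschitz_at_poly.. | rewrite expf_neq0].
Qed.

Lemma p1_eta_high psi z j X : (9 <= j < 12)%N ->
  p1 psi [eta z with inord j |-> X] = p1 psi z.
Proof. by move=> j_range; rewrite /p1 !cx_eta ?ifN_eq //; lia. Qed.

Lemma torus_points_near_Y_BB psi x : psi != 0 -> Y_BB psi x -> forall d, 0 < d ->
  exists2 z, near x d z & [/\ forall i, z i != 0, p1 psi z = 0 & p2 psi z = 0].
Proof.
move=> psi_neq0 [nonexc_x [p1x0 p2x0]].
have [k1 k1_lt3 [xk1_neq0 partner1_neq0]] := p1_nonvanishing_pair psi_neq0 nonexc_x p1x0.
have [k2 k2_lt3 [partner2_neq0 xk2_neq0]] := p2_nonvanishing_pair psi_neq0 nonexc_x p2x0.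
apply: (near_common_zero_torus (p1_cubic_in psi k1_lt3 partner1_neq0)
  (p2_cubic_in psi k2_lt3 partner2_neq0)) => // z X.
by apply: p1_eta_high; lia.
Qed.

Theorem proposition2p10 :
  exists bad : seq C, forall psi : C, psi \notin bad ->
    forall x : 'I_12 -> C, Y_BB psi x <-> strict_transform (Y_LT psi) x.
Proof.
exists [:: 0] => psi; rewrite mem_seq1 => psi_neq0 x; split=> [Yx | [_ closure_x]].
  apply: tclosure_near => [|d /(torus_points_near_Y_BB psi_neq0 Yx)[z near_z]].
    by case: Yx.
  by case=> z_neq0 p1z0 p2z0; exists z => //; apply: phi_preimage_of_torus_Y_BB.
apply: closure_x; [exact: Y_BB_zclosed | exact: Y_BB_G_invariant |].
by move=> y; apply: Y_BB_of_phi_preimage.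
Qed.
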